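(* Let $n=2^r$, $a\in\mathbb{Z}_{2n}^*$ and $b\in 2\mathbb{Z}_{2n}$. Then $\mathrm{SD}(n,R,T)\cong\mathrm{SD}(n,aR,b+aT)$ and $\mathrm{PSD}(n,R,T)\cong\mathrm{PSD}(n,R,n+T)$.
   Context: For a group $G$ and inverse-closed $S\subseteq G\setminus\{1\}$, $\mathrm{Cay}(G,S)$ has vertex set $G$, with $g,h$ adjacent iff $g^{-1}h\in S$. $\mathrm{SD}_n=\langle\rho,\tau\mid\rho^{2n}=\tau^2=1,\ \tau\rho\tau=\rho^{n-1}\rangle$ and $\mathrm{PSD}_n=\langle\rho,\tau\mid\rho^{2n}=\tau^2=1,\ \tau\rho\tau=\rho^{n+1}\rangle$. For $R=-R\subseteq\mathbb{Z}_{2n}\setminus\{0\}$ and $T=(n+1)T\subseteq\mathbb{Z}_{2n}$, $\mathrm{SD}(n,R,T)=\mathrm{Cay}(\mathrm{SD}_n,\{\rho^i:i\in R\}\cup\{\rho^j\tau:j\in T\})$; for $R=-R\subseteq\mathbb{Z}_{2n}\setminus\{0\}$ and $T=(n-1)T\subseteq\mathbb{Z}_{2n}$, $\mathrm{PSD}(n,R,T)=\mathrm{Cay}(\mathrm{PSD}_n,\{\rho^i:i\in R\}\cup\{\rho^j\tau:j\in T\})$. Here $cI=\{cx:x\in I\}$ and $c+I=\{c+x:x\in I\}$ for $I\subseteq\mathbb{Z}_{2n}$, and $\mathbb{Z}_{2n}^*$ is the unit group of $\mathbb{Z}_{2n}$. *)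

From HB Require Import structures.
From mathcomp Require Import all_boot all_algebra.
Set Implicit Arguments. Unset Strict Implicit. Unset Printing Implicit Defensive.
Import GRing.Theory.
Local Open Scope ring_scope.

(* Concrete model of SD_n / PSD_n: the element rho^i tau^e is the pair (i, e)
   with i : 'Z_(2n) and e : bool.  Using tau rho^j tau = rho^(m j) with
   m = n-1 (SD_n) or m = n+1 (PSD_n):
     (rho^i tau^e)(rho^j tau^f) = rho^(i + m^e j) tau^(e+f). *)
Definition dmul (n : nat) (m : 'Z_(2 * n)) (x y : 'Z_(2 * n) * bool)
  : 'Z_(2 * n) * bool :=
  (x.1 + (if x.2 then m * y.1 else y.1), x.2 (+) y.2).

(* inverse: (rho^i)^-1 = rho^-i, (rho^i tau)^-1 = tau rho^-i = rho^(-m i) tau *)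
Definition dinv (n : nat) (m : 'Z_(2 * n)) (x : 'Z_(2 * n) * bool)
  : 'Z_(2 * n) * bool :=
  if x.2 then (- (m * x.1), true) else (- x.1, false).

Definition SD_mult (n : nat) : 'Z_(2 * n) := (n.-1)%:R.
Definition PSD_mult (n : nat) : 'Z_(2 * n) := (n.+1)%:R.

Definition cay_set (n : nat) (R T : {set 'Z_(2 * n)}) : {set 'Z_(2 * n) * bool} :=
  [set (i, false) | i in R] :|: [set (j, true) | j in T].

Definition cay_adj (n : nat) (m : 'Z_(2 * n)) (S : {set 'Z_(2 * n) * bool})
  : rel ('Z_(2 * n) * bool) :=
  fun g h => dmul m (dinv m g) h \in S.

Definition SDgraph (n : nat) (R T : {set 'Z_(2 * n)}) :=
  cay_adj (SD_mult n) (cay_set R T).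
Definition PSDgraph (n : nat) (R T : {set 'Z_(2 * n)}) :=
  cay_adj (PSD_mult n) (cay_set R T).

Definition graph_iso (V : finType) (e1 e2 : rel V) : Prop :=
  exists f : V -> V, bijective f /\ forall x y, e1 x y = e2 (f x) (f y).

Definition scale_set (n : nat) (c : 'Z_(2 * n)) (I : {set 'Z_(2 * n)}) :=
  [set c * x | x in I].
Definition shift_set (n : nat) (c : 'Z_(2 * n)) (I : {set 'Z_(2 * n)}) :=
  [set c + x | x in I].
Definition neg_set (n : nat) (I : {set 'Z_(2 * n)}) := [set - x | x in I].

From HB Require Import structures.
From mathcomp Require Import all_boot all_algebra.
From mathcomp Require Import ring.
Import GRing.Theory.
Set Implicit Arguments. Unset Strict Implicit.
Local Open Scope ring_scope.

(** With [tau rho tau = rho^m], the assignment [rho |-> rho^a], [tau |-> rho^b tau]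
   extends to a group automorphism as soon as [a] is a unit and
   [(rho^b tau)^2 = rho^((m+1) b)] is trivial.  A group automorphism carrying one
   connection set onto another is an isomorphism of the Cayley graphs.  For
   [SD_n], [m + 1 = n] kills every even [b]; for [PSD_n], [m + 1 = n + 2] kills
   [b = n] precisely because [n = 2^r] is even. *)

Section AffineMap.

Variables (n : nat) (m a b : 'Z_(2 * n)).

Definition affine_map (x : 'Z_(2 * n) * bool) : 'Z_(2 * n) * bool :=
  (a * x.1 + (if x.2 then b else 0), x.2).

Hypothesis mb : (m + 1) * b = 0.

Let mbN : m * b = - b.
Proof. by apply/eqP; rewrite -addr_eq0 -mb mulrDl mul1r. Qed.

Lemma affine_map_dmul x y :
  affine_map (dmul m x y) = dmul m (affine_map x) (affine_map y).
Proof.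
case: x y => [i []] [j []]; rewrite /affine_map /dmul /= ?mulrDr ?mbN; congr pair; ring.
Qed.

Lemma affine_map_dinv x : affine_map (dinv m x) = dinv m (affine_map x).
Proof.
case: x => i []; rewrite /affine_map /dinv /= ?mulrDr ?mbN; congr pair; ring.
Qed.

Lemma affine_map_bij : a \is a GRing.unit -> bijective affine_map.
Proof.
move=> ua; exists (fun x => (a^-1 * (x.1 - if x.2 then b else 0), x.2)).
- by case=> i e; rewrite /affine_map /= addrK mulKr.
- by case=> i e; rewrite /affine_map /= mulVKr // subrK.
Qed.

End AffineMap.

Lemma mem_cay_set (n : nat) (R T : {set 'Z_(2 * n)}) i e :
  ((i, e) \in cay_set R T) = if e then i \in T else i \in R.
Proof.
have tagI (e' : bool) : injective (fun j : 'Z_(2 * n) => (j, e')) by move=> ? ? [].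
by rewrite inE; case: e; rewrite mem_imset //; case: imsetP => [[? _ []]|]; rewrite ?orbF.
Qed.

Lemma mem_scale_set (n : nat) (a i : 'Z_(2 * n)) (I : {set 'Z_(2 * n)}) :
  a \is a GRing.unit -> (a * i \in scale_set a I) = (i \in I).
Proof. by move=> ua; rewrite mem_imset //; apply: mulrI. Qed.

Lemma mem_shift_set (n : nat) (b j : 'Z_(2 * n)) (I : {set 'Z_(2 * n)}) :
  (b + j \in shift_set b I) = (j \in I).
Proof. by rewrite mem_imset //; apply: addrI. Qed.

Lemma cay_adj_affine_iso (n : nat) (m a b : 'Z_(2 * n)) (R T R' T' : {set 'Z_(2 * n)}) :
  a \is a GRing.unit -> (m + 1) * b = 0 ->
  (forall i, (a * i \in R') = (i \in R)) ->
  (forall j, (a * j + b \in T') = (j \in T)) ->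
  graph_iso (cay_adj m (cay_set R T)) (cay_adj m (cay_set R' T')).
Proof.
move=> ua mb memR memT; exists (affine_map a b); split; first exact: affine_map_bij.
move=> x y; rewrite /cay_adj -affine_map_dinv // -affine_map_dmul //.
by case: (dmul _ _ _) => i []; rewrite /affine_map /= !mem_cay_set ?addr0.
Qed.

Lemma Zp_char_double (n : nat) : (2 * n)%:R = 0 :> 'Z_(2 * n).
Proof. by case: n => [|n] //; apply: pchar_Zp; rewrite mulnS. Qed.

Lemma SD_mult_double (n : nat) (c : 'Z_(2 * n)) : (0 < n)%N ->
  (SD_mult n + 1) * (2 * c) = 0.
Proof.
move=> n_gt0; rewrite /SD_mult natr1 prednK // mulrA -natrM [(n * 2)%N]mulnC.
by rewrite Zp_char_double mul0r.
Qed.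

Lemma PSD_mult_even (n : nat) : ~~ odd n -> (PSD_mult n + 1) * n%:R = 0 :> 'Z_(2 * n).
Proof.
move=> n_even; rewrite /PSD_mult natr1 -natrM.
have n_half : n = (n./2 * 2)%N.
  by rewrite -[LHS]odd_double_half (negPf n_even) add0n -muln2.
have -> : (n.+2 * n = 2 * n * (n./2).+1)%N by rewrite {1 2 3}n_half; ring.
by rewrite natrM Zp_char_double mul0r.
Qed.

Theorem lemma3p4 (r : nat) (hr : (1 <= r)%N)
    (R T : {set 'Z_(2 * 2 ^ r)}) (a b : 'Z_(2 * 2 ^ r)) :
  (* SD part *)
  ((neg_set R = R) -> (0 \notin R) ->
   (scale_set ((2 ^ r).+1)%:R T = T) ->
   (a \is a GRing.unit) -> (exists c : 'Z_(2 * 2 ^ r), b = 2%:R * c) ->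
   graph_iso (SDgraph R T) (SDgraph (scale_set a R) (shift_set b (scale_set a T))))
  /\
  (* PSD part *)
  ((neg_set R = R) -> (0 \notin R) ->
   (scale_set ((2 ^ r).-1)%:R T = T) ->
   graph_iso (PSDgraph R T) (PSDgraph R (shift_set (2 ^ r)%:R T))).
Proof.
(* The closure hypotheses on [R] and [T] only make the Cayley graphs undirected
   and loopless; the isomorphisms exist without them. *)
split=> [_ _ _ ua [c ->] | _ _ _].
- apply: (cay_adj_affine_iso ua (SD_mult_double c (expn_gt0 2 r))).
    by move=> i; rewrite mem_scale_set.
  by move=> j; rewrite addrC mem_shift_set mem_scale_set.
- have n_even : ~~ odd (2 ^ r) by rewrite oddX orbF -lt0n hr.
  apply: (cay_adj_affine_iso (unitr1 _) (PSD_mult_even n_even)).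
    by move=> i; rewrite mul1r.
  by move=> j; rewrite mul1r addrC mem_shift_set.
Qed.
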